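(* In the setting of the context, let $V$ be the exact output covariance matrix and $V_a$ the block-diagonal approximate covariance matrix. Then $$\|V-V_a\|^2\le e^{4r}N^4\big(\eta+2\sqrt{\eta}\big)^2,$$ where $\|\cdot\|$ is the Frobenius norm and $\eta=\max_\alpha\eta_\alpha$.
   Context: $M$ modes partitioned into $N$ disjoint sublattices $\mathcal L_1,\dots,\mathcal L_N$ (each of $M/N$ modes), each containing exactly one source mode $s_\alpha$. A passive linear-optical circuit with $M\times M$ unitary $U$ ($\hat a_j\mapsto\sum_kU_{jk}\hat a_k$) has real orthogonal symplectic representation $O$. Covariance conventions: $\hat x_j=(\hat a_j+\hat a_j^\dagger)/\sqrt2$, $\hat p_j=i(\hat a_j^\dagger-\hat a_j)/\sqrt2$, $V_{jk}=\tfrac12\mathrm{Tr}[\hat\rho\{\hat Q_j,\hat Q_k\}]$ with $\hat Q=(\hat x_1,\hat p_1,\dots,\hat x_M,\hat p_M)$, vacuum $=\mathbb 1/2$. Input: each source mode is a squeezed vacuum with parameter $r>0$ (covariance block $\tfrac12\mathrm{diag}(e^{2r},e^{-2r})$), all other modes vacuum; $V_{\mathrm{in}}$ is its covariance and $V=OV_{\mathrm{in}}O^T$. For each $\alpha$, let $V^{(\alpha)}_{\mathrm{in}}$ be the covariance with only $s_\alpha$ squeezed and all other modes vacuum, and let $v'_\alpha$ be the restriction of $OV^{(\alpha)}_{\mathrm{in}}O^T$ to the quadratures of modes in $\mathcal L_\alpha$. $V_a$ is the block-diagonal matrix (with respect to the sublattice partition) with diagonal blocks $v'_1,\dots,v'_N$,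 i.e. the covariance of the product state $\bigotimes_\alpha\hat\rho_\alpha$. The leakage rate of source $\alpha$ is $\eta_\alpha=\sum_{j\notin\mathcal L_\alpha}|U_{j,s_\alpha}|^2$. *)

From HB Require Import structures.
From mathcomp Require Import all_boot all_order all_algebra.
From mathcomp Require Import reals sequences exp.
From mathcomp Require Import complex.
Set Implicit Arguments. Unset Strict Implicit. Unset Printing Implicit Defensive.
Import Order.TTheory GRing.Theory Num.Theory.
Local Open Scope ring_scope.

Section Gaussian.
Variable R : realType.
Variable M : nat.

(* Quadrature index: (mode j, q) with q = 0 for x_j and q = 1 for p_j;
   Q = (x_1,p_1,...,x_M,p_M). Real 2M x 2M matrices are represented as
   functions on quadrature indices. *)
Definition quad := ('I_M * 'I_2)%type.
Definition qmat := quad -> quad -> R.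

Definition qmul (A B : qmat) : qmat := fun a b => \sum_(c : quad) A a c * B c b.
Definition qtr (A : qmat) : qmat := fun a b => A b a.

Definition frob2 (A : qmat) : R := \sum_(a : quad) \sum_(b : quad) A a b ^+ 2.

Definition unitary (U : 'M[R[i]]_M) : Prop :=
  U *m (map_mx (@conjc R) U)^T = 1%:M.

(* Real orthogonal symplectic representation of the passive circuit
   a_j -> sum_k U_jk a_k, acting on Q: x_j -> sum_k (Re U_jk x_k - Im U_jk p_k),
   p_j -> sum_k (Im U_jk x_k + Re U_jk p_k). *)
Definition symp_rep (U : 'M[R[i]]_M) : qmat := fun a b =>
  let u := U a.1 b.1 in
  match val a.2, val b.2 with
  | 0%N, 0%N => complex.Re u
  | 0%N, _ => - complex.Im u
  | _, 0%N => complex.Im u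
  | _, _ => complex.Re u
  end.

(* Input covariance: modes in S are squeezed vacua with block
   1/2 diag(e^{2r}, e^{-2r}); all other modes are vacuum (1/2 identity). *)
Definition cov_in (r : R) (S : pred 'I_M) : qmat := fun a b =>
  if a == b then
    (if a.1 \in S then (if val a.2 == 0%N then expR (2 * r) / 2
                                          else expR (- (2 * r)) / 2)
     else 1 / 2)
  else 0.

Definition cov_out (U : 'M[R[i]]_M) (Vin : qmat) : qmat :=
  qmul (qmul (symp_rep U) Vin) (qtr (symp_rep U)).

Variable N : nat.

Definition cov_exact (U : 'M[R[i]]_M) (r : R) (s : 'I_N -> 'I_M) : qmat :=
  cov_out U (cov_in r [pred j | [exists al, s al == j]]).

(* Block-diagonal approximation V_a: block alpha is the restriction to the
   quadratures of L_alpha of O V_in^(alpha) O^T (only s_alpha squeezed). *)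
Definition cov_approx (U : 'M[R[i]]_M) (r : R) (lat : 'I_M -> 'I_N)
    (s : 'I_N -> 'I_M) : qmat := fun a b =>
  if lat a.1 == lat b.1 then
    cov_out U (cov_in r (pred1 (s (lat a.1)))) a b
  else 0.

Definition leak (U : 'M[R[i]]_M) (lat : 'I_M -> 'I_N) (s : 'I_N -> 'I_M)
    (al : 'I_N) : R :=
  \sum_(j : 'I_M | lat j != al) (complex.Re (U j (s al)) ^+ 2 + complex.Im (U j (s al)) ^+ 2).

Definition max_leak (U : 'M[R[i]]_M) (lat : 'I_M -> 'I_N) (s : 'I_N -> 'I_M) : R :=
  \big[Num.max/0]_(al : 'I_N) leak U lat s al.

End Gaussian.

From HB Require Import structures.
From mathcomp Require Import all_boot all_order all_algebra.
From mathcomp Require Import reals sequences exp complex.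
From mathcomp Require Import ring lra.
Import Order.TTheory GRing.Theory Num.Theory.
Local Open Scope ring_scope.
Set Implicit Arguments. Unset Strict Implicit.

(* Write O for the orthogonal symplectic matrix of U and D_q for the excess
   variance (e^{+-2r} - 1)/2 of a squeezed quadrature over the vacuum value 1/2.
   Since the input covariance is diagonal, the output covariance with squeezed
   modes S is  (O O^T)/2 + sum_{j in S} F_j  with
   F_j(a,b) = sum_q O(a,(j,q)) O(b,(j,q)) D_q, and O O^T = 1 by unitarity.
   Hence V - V_a = sum_be (1 - chi_be(a) chi_be(b)) F_{s_be}, where chi_be is
   the indicator of the sublattice L_be: the vacuum parts cancel.

   Each source is bounded separately: by Cauchy-Schwarz over q and
   D_q^2 <= e^{4r}/4, its squared contribution is at most 2 e^{4r} eta_be, the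
   leakage appearing as the weight of column s_be of O outside L_be.  Finally
   Cauchy-Schwarz over the N sources gives ||V - V_a||^2 <= 2 e^{4r} N^2 eta,
   which implies the stated bound since 2 N^2 eta <= N^4 (eta + 2 sqrt eta)^2. *)

Lemma sqr_sum_le_card (R : realFieldType) (I : finType) (x : I -> R) :
  (\sum_i x i) ^+ 2 <= #|I|%:R * \sum_i x i ^+ 2.
Proof.
have cross : (\sum_i x i) ^+ 2 = \sum_i \sum_j x i * x j.
  by rewrite expr2 mulr_suml; apply: eq_bigr => i _; rewrite mulr_sumr.
have diagl : \sum_i \sum_(j : I) x i ^+ 2 = #|I|%:R * \sum_i x i ^+ 2.
  by rewrite mulr_sumr; apply: eq_bigr => i _; rewrite sumr_const mulr_natl.
have diagr : \sum_(i : I) \sum_j x j ^+ 2 = #|I|%:R * \sum_i x i ^+ 2.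
  by rewrite sumr_const mulr_natl.
have : 0 <= \sum_i (\sum_(j : I) x i ^+ 2 + \sum_j x j ^+ 2 - 2 * \sum_j x i * x j).
  apply: sumr_ge0 => i _; rewrite mulr_sumr -big_split -sumrB /=.
  by apply: sumr_ge0 => j _; rewrite (_ : _ - _ = (x i - x j) ^+ 2) ?sqr_ge0 //; ring.
by rewrite sumrB big_split /= -mulr_sumr -cross diagl diagr; lra.
Qed.

Lemma sqr_one_sub_indicator (R : realDomainType) (x y : bool) :
  (1 - x%:R * y%:R) ^+ 2 <= (~~ x)%:R + (~~ y)%:R :> R.
Proof. by case: x; case: y; rewrite /= ?mulr1n ?mulr0n; lra. Qed.

Lemma sum_pair_weights (R : comPzRingType) (I : finType) (c w : I -> R) :
  \sum_a \sum_b (c a + c b) * (w a * w b) = 2 * (\sum_a c a * w a) * \sum_a w a.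
Proof.
transitivity (\sum_a (c a * w a * \sum_b w b + w a * \sum_b c b * w b)).
  by apply: eq_bigr => a _; rewrite !mulr_sumr -big_split; apply: eq_bigr => b _ /=; ring.
by rewrite big_split /= -!mulr_suml; ring.
Qed.

Lemma sum_ord2 (R : nmodType) (Y : 'I_2 -> R) : \sum_q Y q = Y ord0 + Y ord_max.
Proof. by rewrite big_ord_recr big_ord1; congr (Y _ + _); apply/val_inj. Qed.

Lemma sum_quad (R : nmodType) (M : nat) (X : quad M -> R) :
  \sum_c X c = \sum_(j < M) \sum_(q < 2) X (j, q).
Proof. by rewrite pair_big; apply: eq_bigr => -[]. Qed.

Lemma Re_sum (R : rcfType) (I : finType) (F : I -> R[i]) :
  complex.Re (\sum_i F i) = \sum_i complex.Re (F i).
Proof. exact: (raddf_sum (@complex.Re R : Rcomplex R -> R)). Qed.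

Lemma Im_sum (R : rcfType) (I : finType) (F : I -> R[i]) :
  complex.Im (\sum_i F i) = \sum_i complex.Im (F i).
Proof. exact: (raddf_sum (@complex.Im R : Rcomplex R -> R)). Qed.

Lemma Re_natb (R : rcfType) (b : bool) : complex.Re (b%:R : R[i]) = b%:R.
Proof. by case: b. Qed.

Lemma Im_natb (R : rcfType) (b : bool) : complex.Im (b%:R : R[i]) = 0.
Proof. by case: b. Qed.

Section Rep.
Variables (R : realType) (M : nat) (U : 'M[R[i]]_M).
Local Notation O := (symp_rep U).

Lemma symp_rep_block (j k : 'I_M) (q : 'I_2) :
  \sum_(q' < 2) O (j, q') (k, q) ^+ 2
    = complex.Re (U j k) ^+ 2 + complex.Im (U j k) ^+ 2.
Proof. by rewrite sum_ord2 /symp_rep /=; case: q => -[|[|q]] //= _; ring. Qed.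

Hypothesis HU : unitary U.

Lemma unitary_col_norm (k : 'I_M) :
  \sum_j (complex.Re (U j k) ^+ 2 + complex.Im (U j k) ^+ 2) = 1.
Proof.
have /(congr1 (fun A : 'M[R[i]]_M => complex.Re (A k k))) := mulmx1C HU.
rewrite !mxE eqxx Re_sum /= => <-; apply: eq_bigr => j _.
by rewrite !mxE; case: (U j k) => x y /=; ring.
Qed.

Lemma symp_rep_col_norm (k : 'I_M) (q : 'I_2) : \sum_a O a (k, q) ^+ 2 = 1.
Proof.
by rewrite sum_quad -(unitary_col_norm k); apply: eq_bigr => j _; rewrite symp_rep_block.
Qed.

(* O O^T = 1: the real and imaginary parts of U U^dagger = 1 give the
   four 2x2 blocks. *)
Lemma symp_rep_orthogonal (a b : quad M) : \sum_c O a c * O b c = (a == b)%:R.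
Proof.
case: a b => [j qa] [k qb].
have /(congr1 (fun A : 'M[R[i]]_M => A j k)) := HU; rewrite !mxE => delta.
have re_dot : \sum_l (complex.Re (U j l) * complex.Re (U k l)
                      + complex.Im (U j l) * complex.Im (U k l)) = (j == k)%:R.
  rewrite -[RHS](Re_natb R) -delta Re_sum; apply: eq_bigr => l _; rewrite !mxE.
  by case: (U j l) => ? ?; case: (U k l) => ? ? /=; ring.
have im_dot : \sum_l (complex.Im (U j l) * complex.Re (U k l)
                      - complex.Re (U j l) * complex.Im (U k l)) = 0.
  rewrite -[RHS](Im_natb R (j == k)) -delta Im_sum; apply: eq_bigr => l _; rewrite !mxE.
  by case: (U j l) => ? ?; case: (U k l) => ? ? /=; ring.
rewrite sum_quad xpair_eqE.
case: qa => -[|[|?]] // ?; case: qb => -[|[|?]] // ?.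
- rewrite /= andbT -re_dot.
  by apply: eq_bigr => l _; rewrite sum_ord2 /symp_rep /=; ring.
- rewrite /= andbF -[RHS]oppr0 -[in RHS]im_dot -sumrN.
  by apply: eq_bigr => l _; rewrite sum_ord2 /symp_rep /=; ring.
- rewrite /= andbF -[RHS]im_dot.
  by apply: eq_bigr => l _; rewrite sum_ord2 /symp_rep /=; ring.
- rewrite /= andbT -re_dot.
  by apply: eq_bigr => l _; rewrite sum_ord2 /symp_rep /=; ring.
Qed.

Lemma symp_rep_leak (N : nat) (lat : 'I_M -> 'I_N) (s : 'I_N -> 'I_M)
    (be : 'I_N) (q : 'I_2) :
  \sum_a (lat a.1 != be)%:R * O a (s be, q) ^+ 2 = leak U lat s be.
Proof.
rewrite sum_quad /leak [in RHS]big_mkcond; apply: eq_bigr => j _.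
by rewrite /= -mulr_sumr symp_rep_block; case: (lat j != be); rewrite ?mul1r ?mul0r.
Qed.

End Rep.

Definition squeeze_excess (R : realType) (r : R) (q : 'I_2) : R :=
  (if val q == 0%N then expR (2 * r) / 2 else expR (- (2 * r)) / 2) - 1 / 2.

Lemma squeeze_excess_sqr_le (R : realType) (r : R) (q : 'I_2) :
  0 < r -> squeeze_excess r q ^+ 2 <= expR (4 * r) / 4.
Proof.
move=> r_gt0.
have e_ge1 : 1 <= expR (2 * r) by have := expR_ge1Dx (2 * r); lra.
have ef_1 := expRxMexpNx_1 (2 * r); have f_gt0 := expR_gt0 (- (2 * r)).
have -> : expR (4 * r) = expR (2 * r) ^+ 2 by rewrite -expRM_natl; congr expR; lra.
rewrite /squeeze_excess; case: (val q == 0%N); nra.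
Qed.

Lemma cov_in_diag (R : realType) (M : nat) (r : R) (S : pred 'I_M) (c : quad M) :
  cov_in r S c c = 1 / 2 + (c.1 \in S)%:R * squeeze_excess r c.2.
Proof.
rewrite /cov_in /squeeze_excess eqxx.
by case: (c.1 \in S); case: (val c.2 == 0%N); rewrite /=; ring.
Qed.

Section Covariance.
Variables (R : realType) (M : nat) (U : 'M[R[i]]_M) (r : R).
Hypothesis HU : unitary U.
Local Notation O := (symp_rep U).

Definition squeeze_term (j : 'I_M) (a b : quad M) : R :=
  \sum_q O a (j, q) * O b (j, q) * squeeze_excess r q.

(* Output covariance of a diagonal input: vacuum plus one term per squeezed
   mode, the vacuum part being (O O^T)/2 = 1/2. *)
Lemma cov_out_cov_in (S : pred 'I_M) (a b : quad M) :
  cov_out U (cov_in r S) a b = (a == b)%:R / 2 + \sum_(j in S) squeeze_term j a b.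
Proof.
have diag c : \sum_d O a d * cov_in r S d c = O a c * cov_in r S c c.
  rewrite (bigD1 c) //= big1 ?addr0 // => d /negbTE ne_dc.
  by rewrite /cov_in ne_dc mulr0.
rewrite /cov_out /qmul /qtr.
under eq_bigr => c _ do rewrite diag cov_in_diag mulrDr mulrDl.
rewrite big_split /= -(symp_rep_orthogonal HU a b) mulr_suml; congr (_ + _).
  by apply: eq_bigr => c _; ring.
rewrite sum_quad [in RHS]big_mkcond; apply: eq_bigr => j _ /=.
case: (j \in S); last by rewrite big1 // => q _; rewrite mul0r mulr0 mul0r.
by apply: eq_bigr => q _; rewrite mul1r; ring.
Qed.

Hypothesis r_gt0 : 0 < r.

(* Cauchy-Schwarz over the two quadratures. *)
Lemma squeeze_term_sqr_le (j : 'I_M) (a b : quad M) :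
  squeeze_term j a b ^+ 2 <= expR (4 * r) / 2 * \sum_q O a (j, q) ^+ 2 * O b (j, q) ^+ 2.
Proof.
apply: le_trans (sqr_sum_le_card _) _; rewrite card_ord mulr_sumr [leRHS]mulr_sumr.
apply: ler_sum => q _; have := squeeze_excess_sqr_le q r_gt0.
have := sqr_ge0 (O a (j, q) * O b (j, q)); rewrite !exprMn; nra.
Qed.

End Covariance.

Section Approximation.
Variables (R : realType) (M N : nat) (U : 'M[R[i]]_M) (r : R).
Variables (lat : 'I_M -> 'I_N) (s : 'I_N -> 'I_M).
Hypothesis HU : unitary U.
Hypothesis lat_s : forall al, lat (s al) = al.

(* All sources squeezed; s is injective since lat is a left inverse. *)
Lemma cov_exact_eq (a b : quad M) :
  cov_exact U r s a b = (a == b)%:R / 2 + \sum_be squeeze_term U r (s be) a b.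
Proof.
rewrite /cov_exact (cov_out_cov_in _ HU); congr (_ + _).
transitivity (\sum_(j in s @: setT) squeeze_term U r j a b).
  apply: eq_bigl => j; rewrite !inE.
  by apply/existsP/imsetP => [[al /eqP <-]|[al _ ->]]; exists al.
rewrite big_imset; last by move=> al be _ _; apply: (can_inj lat_s).
by apply: eq_bigl => al; rewrite inE.
Qed.

Lemma cov_approx_eq (a b : quad M) :
  cov_approx U r lat s a b = if lat a.1 == lat b.1 then
    (a == b)%:R / 2 + squeeze_term U r (s (lat a.1)) a b else 0.
Proof. by rewrite /cov_approx (cov_out_cov_in _ HU) big_pred1_eq. Qed.

(* The exact and approximate covariances share the vacuum part; their
   difference is the part of each source's squeezing that falls outside the
   block-diagonal pattern. *)
Lemma cov_diff_eq (a b : quad M) :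
  cov_exact U r s a b - cov_approx U r lat s a b =
  \sum_be (1 - (lat a.1 == be)%:R * (lat b.1 == be)%:R) * squeeze_term U r (s be) a b.
Proof.
have in_block : \sum_be (lat a.1 == be)%:R * (lat b.1 == be)%:R * squeeze_term U r (s be) a b
    = if lat a.1 == lat b.1 then squeeze_term U r (s (lat a.1)) a b else 0.
  rewrite (bigD1 (lat a.1)) //= eqxx mul1r big1 => [|be /negbTE ne_be].
    by rewrite addr0 [lat b.1 == _]eq_sym; case: ifP; rewrite ?mul1r ?mul0r.
  by rewrite eq_sym ne_be !mul0r.
under eq_bigr => be _ do rewrite mulrBl mul1r.
rewrite sumrB in_block cov_exact_eq cov_approx_eq.
case: (lat a.1 =P lat b.1) => [_ | ne_lat]; first ring.
suff -> : (a == b) = false by rewrite mul0r add0r subr0.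
by apply: contra_notF ne_lat => /eqP ->.
Qed.

Hypothesis r_gt0 : 0 < r.

Lemma squeeze_leak_bound (be : 'I_N) :
  \sum_a \sum_b ((1 - (lat a.1 == be)%:R * (lat b.1 == be)%:R)
                   * squeeze_term U r (s be) a b) ^+ 2
  <= 2 * expR (4 * r) * leak U lat s be.
Proof.
pose w q (a : quad M) := symp_rep U a (s be, q) ^+ 2.
pose out (a : quad M) : R := (lat a.1 != be)%:R.
apply: (@le_trans _ _ (\sum_a \sum_b (out a + out b)
                        * (expR (4 * r) / 2 * \sum_q w q a * w q b))).
  apply: ler_sum => a _; apply: ler_sum => b _; rewrite exprMn.
  apply: ler_pM; rewrite ?sqr_ge0 ?sqr_one_sub_indicator //.
  exact: squeeze_term_sqr_le.
under eq_bigr => a _ do under eq_bigr => b _ do rewrite mulrCA mulr_sumr.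
under eq_bigr => a _ do rewrite -mulr_sumr exchange_big.
rewrite -mulr_sumr exchange_big /=.
under eq_bigr => q _ do rewrite sum_pair_weights /out /w symp_rep_leak (symp_rep_col_norm HU).
by rewrite sum_ord2; lra.
Qed.

End Approximation.

Lemma frob2_ext (R : realType) (M : nat) (A B : qmat R M) :
  (forall a b, A a b = B a b) -> frob2 A = frob2 B.
Proof. by move=> eqAB; apply: eq_bigr => a _; apply: eq_bigr => b _; rewrite eqAB. Qed.

Lemma frob2_sum_le (R : realType) (M : nat) (I : finType) (G : I -> qmat R M) :
  frob2 (fun a b => \sum_i G i a b) <= #|I|%:R * \sum_i frob2 (G i).
Proof.
have -> : #|I|%:R * \sum_i frob2 (G i)
    = \sum_a \sum_b #|I|%:R * \sum_i G i a b ^+ 2.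
  rewrite /frob2 exchange_big mulr_sumr; apply: eq_bigr => a _.
  by rewrite exchange_big mulr_sumr.
by apply: ler_sum => a _; apply: ler_sum => b _; apply: sqr_sum_le_card.
Qed.

Section MaxLeak.
Variables (R : realType) (M N : nat) (U : 'M[R[i]]_M).
Variables (lat : 'I_M -> 'I_N) (s : 'I_N -> 'I_M).

Lemma max_leak_ge0 : 0 <= max_leak U lat s.
Proof.
rewrite /max_leak; elim/big_ind: _ => [//| x y x_ge0 _ | be _]; first by rewrite le_max x_ge0.
by apply: sumr_ge0 => j _; rewrite addr_ge0 ?sqr_ge0.
Qed.

Lemma leak_le_max_leak (be : 'I_N) : leak U lat s be <= max_leak U lat s.
Proof. by rewrite /max_leak (bigD1 be) //= le_max lexx. Qed.

End MaxLeak.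

Lemma quartic_leak_bound (R : realType) (n : nat) (eta : R) : 0 <= eta ->
  2 * n%:R ^+ 2 * eta <= n%:R ^+ 4 * (eta + 2 * Num.sqrt eta) ^+ 2.
Proof.
move=> eta_ge0.
have n2_le_n4 : n%:R ^+ 2 <= n%:R ^+ 4 :> R.
  rewrite -!natrX ler_nat; case: n => [|n]; first by rewrite !exp0n.
  by rewrite leq_pexp2l.
have := sqrtr_ge0 eta; have := sqr_sqrtr eta_ge0.
set t := Num.sqrt eta => eta_t t_ge0.
have two_eta : 2 * eta <= (eta + 2 * t) ^+ 2 by rewrite -eta_t; nra.
have := sqr_ge0 (eta + 2 * t); have : 0 <= n%:R ^+ 2 :> R by exact: sqr_ge0.
nra.
Qed.

Theorem lemma3 (R : realType) (M N : nat)
  (lat : 'I_M -> 'I_N) (s : 'I_N -> 'I_M) (U : 'M[R[i]]_M) (r : R) :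
  (N %| M)%N ->
  (forall al : 'I_N, #|[set j | lat j == al]| = (M %/ N)%N) ->
  (forall al : 'I_N, lat (s al) = al) ->
  unitary U ->
  0 < r ->
  frob2 (fun a b => cov_exact U r s a b - cov_approx U r lat s a b)
    <= expR (4 * r) * (N%:R) ^+ 4 *
       (max_leak U lat s + 2 * Num.sqrt (max_leak U lat s)) ^+ 2.
Proof.
move=> _ _ lat_s HU r_gt0.
set eta := max_leak U lat s.
rewrite (frob2_ext (cov_diff_eq r HU lat_s)).
apply: le_trans (frob2_sum_le _) _; rewrite card_ord.
apply: (@le_trans _ _ (N%:R * \sum_(be < N) (2 * expR (4 * r) * eta))).
  apply: ler_wpM2l => //; apply: ler_sum => be _.
  apply: le_trans (squeeze_leak_bound lat s HU r_gt0 be) _.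
  by rewrite ler_wpM2l ?leak_le_max_leak // mulr_ge0 // ltW // expR_gt0.
rewrite sumr_const card_ord.
have -> : N%:R * (2 * expR (4 * r) * eta *+ N)
          = expR (4 * r) * (2 * N%:R ^+ 2 * eta) by rewrite -mulr_natr; ring.
rewrite -[leRHS]mulrA; apply: ler_wpM2l; first exact/ltW/expR_gt0.
exact/quartic_leak_bound/max_leak_ge0.
Qed.
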